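(* Let $\{(x_i,u_i)\}_{i=1}^N$, $\hat u_\theta$, $\ell$, $\mathcal L(\theta)=\frac1N\sum_{i=1}^N\ell(\hat u_\theta(x_i),u_i)$ and $\hat u_X$ be as in the context, and assume $\ell$ satisfies the optimal stationarity condition. Assume $\|\nabla_\theta\mathcal L(\theta)-\nabla_\theta\mathcal L(\theta')\|\le L\|\theta-\theta'\|$ for all $\theta,\theta'\in\mathbb R^{D_\theta}$ and some $L\ge0$. Let $\{\theta^{(r)}\}_{r\ge0}$ be defined by $\theta^{(r+1)}=\theta^{(r)}-\epsilon^{(r)}\bar g^{(r)}$ from an initial $\theta^{(0)}$, where there exist constants $\bar c,\underline c>0$ such that for every $r\ge0$: $\underline c\,\|\nabla_\theta\mathcal L(\theta^{(r)})\|^2\le\nabla_\theta\mathcal L(\theta^{(r)})^\top\bar g^{(r)}$ and $\|\bar g^{(r)}\|^2\le\bar c\,\|\nabla_\theta\mathcal L(\theta^{(r)})\|^2$. Suppose the learning rates satisfy either (i) $\zeta\le\epsilon^{(r)}\le\frac{\underline c(2-\zeta)}{L\bar c}$ for all $r$, for some $\zeta>0$, or (ii) $\lim_{r\to\infty}\epsilon^{(r)}=0$ and $\sum_{r=0}^\infty\epsilon^{(r)}=\infty$. Then every limit point $\theta$ of $\{\theta^{(r)}\}_r$ with $\operatorname{rank}\big(\frac{\partial\hat u_X(\theta)}{\partial\theta}\big)=ND_u$ is a global minimum of $\mathcal L$.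
   Context: Setting: dataset $\{(x_i,u_i)\}_{i=1}^N$ with $x_i\in\mathcal X\subseteq\mathbb R^{D_x}$, $u_i\in\mathcal U\subseteq\mathbb R^{D_u}$; model $\hat u_\theta(x)\in\mathbb R^{D_u}$, $\theta\in\mathbb R^{D_\theta}$, with $\theta\mapsto\hat u_\theta(x_i)$ differentiable for each $i$; loss $\ell:\mathbb R^{D_u}\times\mathcal U\to\mathbb R_{\ge0}$. $\hat u_X(\theta)=\operatorname{vec}\big((\hat u_\theta(x_1),\dots,\hat u_\theta(x_N))\big)\in\mathbb R^{ND_u}$, with Jacobian $\frac{\partial\hat u_X(\theta)}{\partial\theta}\in\mathbb R^{ND_u\times D_\theta}$. Definition (optimal stationarity condition): $\ell$ satisfies it if for all $u\in\mathcal U$ and $q\in\mathbb R^{D_u}$ the gradient $\nabla_q\ell(q,u)$ exists, and $\nabla_q\ell(q,u)=0$ implies $\ell(q,u)\le\ell(q',u)$ for all $q'\in\mathbb R^{D_u}$. *)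

From HB Require Import structures.
From mathcomp Require Import all_boot all_order all_algebra.
From mathcomp Require Import all_classical all_reals all_analysis.
Set Implicit Arguments. Unset Strict Implicit. Unset Printing Implicit Defensive.
Import Order.TTheory GRing.Theory Num.Theory.
Import numFieldNormedType.Exports.
Local Open Scope ring_scope.
Local Open Scope classical_set_scope.

Section Defs.
Variable R : realType.

Definition dotv n (a b : 'rV[R]_n) : R := \sum_(j < n) a 0 j * b 0 j.
Definition enorm n (a : 'rV[R]_n) : R := Num.sqrt (dotv a a).

Definition grad n (f : 'rV[R]_n -> R) (p : 'rV[R]_n) : 'rV[R]_n :=
  \row_(j < n) ('d f p) (delta_mx 0 j).

Definition optimal_stationarity Du (U : set 'rV[R]_Du)
    (ell : 'rV[R]_Du -> 'rV[R]_Du -> R) : Prop :=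
  forall u, U u -> forall q : 'rV[R]_Du,
    differentiable (fun q' => ell q' u) q /\
    (grad (fun q' => ell q' u) q = 0 ->
       forall q' : 'rV[R]_Du, ell q u <= ell q' u).

Definition emp_loss N Dx Du Dth (xs : 'I_N -> 'rV[R]_Dx) (us : 'I_N -> 'rV[R]_Du)
    (uhat : 'rV[R]_Dth -> 'rV[R]_Dx -> 'rV[R]_Du)
    (ell : 'rV[R]_Du -> 'rV[R]_Du -> R) (th : 'rV[R]_Dth) : R :=
  N%:R^-1 * \sum_(i < N) ell (uhat th (xs i)) (us i).

Definition uX N Dx Du Dth (xs : 'I_N -> 'rV[R]_Dx)
    (uhat : 'rV[R]_Dth -> 'rV[R]_Dx -> 'rV[R]_Du) (th : 'rV[R]_Dth)
    : 'rV[R]_(N * Du) :=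
  mxvec (\matrix_(i < N, j < Du) uhat th (xs i) 0 j).

(* Jacobian of f : R^n -> R^m as an m x n matrix (paper's convention);
   the library's 'J f p is its transpose. *)
Definition jac n m (f : 'rV[R]_n -> 'rV[R]_m) (p : 'rV[R]_n) : 'M[R]_(m, n) :=
  (jacobian f p)^T.

End Defs.

From HB Require Import structures.
From mathcomp Require Import all_boot all_order all_algebra.
From mathcomp Require Import all_classical all_reals all_analysis.
From mathcomp Require Import ring lra.
Import Order.TTheory GRing.Theory Num.Theory.
Import numFieldNormedType.Exports.
Local Open Scope ring_scope.
Local Open Scope classical_set_scope.
Set Implicit Arguments. Unset Strict Implicit. Unset Printing Implicit Defensive.

(* 1. Euclidean geometry of 'rV[R]_n: dot product, Cauchy-Schwarz, and the
      comparison of the Euclidean norm with the matrix norm of the topology.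
   2. Descent lemma: an L-Lipschitz gradient bounds f above by its quadratic
      model, so each admissible step decreases f by c eps_r |grad f|^2.
   3. Limit points: if f >= 0 decreases sufficiently, steps are bounded by
      eps_r |grad f|, and the tails of sum eps_r are unbounded, then every
      limit point is stationary (near a non-stationary point the iterates get
      trapped and f would decrease without bound).
   4. Both learning-rate regimes of the theorem provide the margin c and the
      unbounded tails needed above.
   5. Structure of L: at a stationary point where the Jacobian of
      theta |-> (uhat_theta(x_i))_i has full row rank, every per-sample loss is
      stationary, hence minimal by the optimal stationarity condition; so
      the point is a global minimum of L. *)

Lemma sqr_le_nonneg (R : realDomainType) (x y : R) :
  0 <= y -> x ^+ 2 <= y ^+ 2 -> x <= y.
Proof.
move=> y0 h; have [x0|x0] := lerP x 0; first exact: le_trans x0 y0.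
by rewrite -(ler_pXn2r (n:=2)) // ?nnegrE // ltW.
Qed.

Section Euclid.
Variables (R : realType) (n : nat).
Implicit Types a b v : 'rV[R]_n.

Lemma dotvC a b : dotv a b = dotv b a.
Proof. by apply: eq_bigr => j _; rewrite mulrC. Qed.

Lemma dotvDl a b v : dotv (a + b) v = dotv a v + dotv b v.
Proof. by rewrite /dotv -big_split; apply: eq_bigr => j _; rewrite mxE mulrDl. Qed.

Lemma dotvZl k a v : dotv (k *: a) v = k * dotv a v.
Proof. by rewrite /dotv mulr_sumr; apply: eq_bigr => j _; rewrite mxE mulrA. Qed.

Lemma dotvBl a b v : dotv (a - b) v = dotv a v - dotv b v.
Proof. by rewrite -scaleN1r dotvDl dotvZl mulN1r. Qed.

Lemma dotvDr a b v : dotv v (a + b) = dotv v a + dotv v b.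
Proof. by rewrite dotvC dotvDl !(dotvC v). Qed.

Lemma dotvZr k a v : dotv v (k *: a) = k * dotv v a.
Proof. by rewrite dotvC dotvZl dotvC. Qed.

Lemma dotvBr a b v : dotv v (a - b) = dotv v a - dotv v b.
Proof. by rewrite !(dotvC v) dotvBl. Qed.

Lemma dotv0l v : dotv 0 v = 0.
Proof. by rewrite -(scale0r 0) dotvZl mul0r. Qed.

Lemma dotv_ge0 a : 0 <= dotv a a.
Proof. by apply: sumr_ge0 => j _; rewrite -expr2 sqr_ge0. Qed.

Lemma dotv_eq0 a : dotv a a = 0 -> a = 0.
Proof.
move/eqP; rewrite psumr_eq0 => [/allP h|j _]; last by rewrite -expr2 sqr_ge0.
apply/rowP => j; rewrite mxE; apply/eqP.
by rewrite -sqrf_eq0 expr2; exact: h (mem_index_enum j).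
Qed.

Lemma enorm_ge0 a : 0 <= enorm a.
Proof. exact: sqrtr_ge0. Qed.

Lemma enorm_sq a : enorm a ^+ 2 = dotv a a.
Proof. by rewrite sqr_sqrtr // dotv_ge0. Qed.

Lemma enorm0 : enorm (0 : 'rV[R]_n) = 0.
Proof. by rewrite /enorm dotv0l sqrtr0. Qed.

Lemma enorm_eq0 a : enorm a = 0 -> a = 0.
Proof. by move=> h; apply: dotv_eq0; rewrite -enorm_sq h expr0n. Qed.

(* Cauchy-Schwarz: expand |(b.b) a - (a.b) b|^2 >= 0. *)
Lemma cauchy_schwarz a b : dotv a b <= enorm a * enorm b.
Proof.
have [b0|bn0] := eqVneq b 0; first by rewrite b0 dotvC dotv0l mulr_ge0 ?enorm_ge0.
have C0 : 0 < dotv b b.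
  by rewrite lt_def dotv_ge0 andbT; apply: contra_neq bn0; exact: dotv_eq0.
apply: sqr_le_nonneg; first by rewrite mulr_ge0 ?enorm_ge0.
rewrite exprMn !enorm_sq.
have := dotv_ge0 (dotv b b *: a - dotv a b *: b).
rewrite !(dotvBl, dotvBr, dotvZl, dotvZr) (dotvC b a).
set A := dotv a a; set B := dotv a b; set C := dotv b b => h.
have : 0 <= C * (A * C - B ^+ 2) by move: h; congr (_ <= _); ring.
by rewrite pmulr_rge0 // subr_ge0 mulrC.
Qed.

Lemma enormD a b : enorm (a + b) <= enorm a + enorm b.
Proof.
apply: sqr_le_nonneg; first by rewrite addr_ge0 ?enorm_ge0.
rewrite enorm_sq sqrrD !enorm_sq !(dotvDl, dotvDr) (dotvC b a).
have := cauchy_schwarz a b; lra.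
Qed.

Lemma enorm_sub_trans a b v : enorm (a - v) <= enorm (a - b) + enorm (b - v).
Proof.
have -> : a - v = (a - b) + (b - v) by rewrite addrA subrK.
exact: enormD.
Qed.

Lemma enormZ k a : enorm (k *: a) = `|k| * enorm a.
Proof.
by rewrite /enorm dotvZl dotvZr mulrA -expr2 sqrtrM ?sqr_ge0 // sqrtr_sqr.
Qed.

Lemma enormN a : enorm (- a) = enorm a.
Proof. by rewrite -scaleN1r enormZ normrN normr1 mul1r. Qed.

(* The Euclidean norm is dominated by n times the sup norm of matrices,
   which is the norm underlying the topology on 'rV[R]_n. *)
Lemma enorm_le_mx_norm a : enorm a <= n%:R * `|a|.
Proof.
apply: sqr_le_nonneg; first by rewrite mulr_ge0.
have entry j : a 0 j * a 0 j <= `|a| ^+ 2.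
  rewrite -expr2 -real_normK ?num_real //; apply: lerXn2r; rewrite ?nnegrE //.
  by rewrite [leRHS]/Num.Def.normr /= mx_normrE (le_bigmax _ _ (0, j)).
rewrite enorm_sq; apply: le_trans (ler_sum _ (fun j _ => entry j)) _.
rewrite sumr_const card_ord exprMn -[_ *+ n]mulr_natl.
apply: ler_wpM2r; first exact: exprn_ge0.
by rewrite -natrX ler_nat; case: (n) => // m; rewrite expnS leq_pmulr.
Qed.

Lemma grad_dotv (f : 'rV[R]_n -> R) p v : dotv (grad f p) v = 'd f p v.
Proof.
rewrite {2}(row_sum_delta v) linear_sum; apply: eq_bigr => j _.
by rewrite linearZ /= mxE mulrC.
Qed.

Lemma step_length_bound (v w : 'rV[R]_n) (e cbar : R) : 0 <= e -> 0 <= cbar ->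
  enorm v ^+ 2 <= cbar * enorm w ^+ 2 -> enorm (e *: v) <= e * Num.sqrt cbar * enorm w.
Proof.
move=> e0 cbar0 len; rewrite enormZ ger0_norm // -mulrA ler_wpM2l //.
apply: sqr_le_nonneg; first by rewrite mulr_ge0 ?sqrtr_ge0 ?enorm_ge0.
by rewrite exprMn (sqr_sqrtr cbar0).
Qed.

End Euclid.

Section Smooth.
Variables (R : realType) (n : nat) (f : 'rV[R]_n -> R) (Lc : R).
Hypothesis f_diff : forall p, differentiable f p.
Hypothesis grad_lip : forall a b, enorm (grad f a - grad f b) <= Lc * enorm (a - b).

Lemma line_derive (x d : 'rV[R]_n) (t : R) :
  is_derive t (1:R) (fun s : R => f (x + s *: d)) (dotv (grad f (x + t *: d)) d).
Proof.
have line_diff : is_diff t (fun s : R => x + s *: d) (0 + ( *:%R^~ d)).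
  have -> : (fun s : R => x + s *: d) = cst x + ( *:%R^~ d) by apply: funext.
  exact: is_diffD.
have [_ dline] := line_diff.
have -> : (fun s : R => f (x + s *: d)) = f \o (fun s : R => x + s *: d) by [].
apply: DeriveDef; first exact/diff_derivable/differentiable_comp.
rewrite deriveE; last exact/differentiable_comp.
by rewrite diff_comp //= dline /= add0r scale1r grad_dotv.
Qed.

Lemma descent_lemma (x d : 'rV[R]_n) :
  f (x + d) <= f x + dotv (grad f x) d + Lc / 2 * enorm d ^+ 2.
Proof.
set k := dotv (grad f x) d; set c := Lc / 2 * enorm d ^+ 2.
pose P : {poly R} := k *: 'X + c *: 'X^2.
pose psi := ((fun s : R => f (x + s *: d)) - horner P : R -> R).
have dpsi s : is_derive s (1:R) psi (dotv (grad f (x + s *: d)) d - P^`().[s]).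
  exact: is_deriveB (line_derive x d s) _.
have dP s : P^`().[s] = k + Lc * s * enorm d ^+ 2.
  have -> : Lc * s * enorm d ^+ 2 = c * (2 * s) by rewrite /c; field.
  by rewrite /P derivD !derivZ derivX derivXn !hornerE /=; ring.
(* The slope of psi is nonpositive: the gradient moves by at most L s |d|. *)
have psi'_le0 s : 0 <= s -> dotv (grad f (x + s *: d)) d - P^`().[s] <= 0.
  move=> s0; rewrite dP subr_le0 -lerBlDl /k -dotvBl.
  apply: le_trans; first exact: cauchy_schwarz.
  rewrite expr2 mulrA; apply: ler_wpM2r; first exact: enorm_ge0.
  apply: le_trans; first exact: grad_lip.
  by rewrite addrC addKr enormZ ger0_norm // mulrA.
have psi_cont : {within `[0, 1], continuous psi}.
  apply: continuous_subspaceT => s; apply: differentiable_continuous.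
  by apply/derivable1_diffP; have [] := dpsi s.
have psi10 : psi 1 <= psi 0.
  apply: (ler0_derive1_le_cc _ _ psi_cont); rewrite ?bound_itvE ?ler01 //.
  move=> s; rewrite in_itv /= => /andP[s0 _].
  by rewrite derive1E derive_val; exact: psi'_le0 (ltW s0).
move: psi10; rewrite /psi /P !fctE /= !hornerD !hornerZ !hornerX !hornerXn.
rewrite scale1r scale0r addr0 expr1n expr0n !mulr0 !mulr1; lra.
Qed.

Lemma gradient_related_step_decrease (x v : 'rV[R]_n) (e cund cbar c : R) :
  0 <= e -> 0 <= Lc ->
  cund * enorm (grad f x) ^+ 2 <= dotv (grad f x) v ->
  enorm v ^+ 2 <= cbar * enorm (grad f x) ^+ 2 ->
  e * (Lc * cbar) <= 2 * (cund - c) ->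
  f (x - e *: v) <= f x - c * e * enorm (grad f x) ^+ 2.
Proof.
move=> e0 Lc0 angle len margin; set G2 := enorm (grad f x) ^+ 2.
have := descent_lemma x (- (e *: v)).
rewrite dotvC -scaleNr dotvZl dotvC enormZ normrN ger0_norm // exprMn => model.
have G0 : 0 <= G2 by exact: sqr_ge0.
have a1 : e * (cund * G2) <= e * dotv (grad f x) v by exact: ler_wpM2l.
have a2 : Lc / 2 * (e ^+ 2 * enorm v ^+ 2) <= Lc / 2 * (e ^+ 2 * (cbar * G2)).
  by apply: ler_wpM2l; [lra | apply: ler_wpM2l; [exact: sqr_ge0 | exact: len]].
have a3 : e * G2 / 2 * (e * (Lc * cbar)) <= e * G2 / 2 * (2 * (cund - c)).
  by apply: ler_wpM2l => //; rewrite mulr_ge0 // mulr_ge0.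
have e1 : Lc / 2 * (e ^+ 2 * (cbar * G2)) = e * G2 / 2 * (e * (Lc * cbar)) by ring.
have e2 : e * G2 / 2 * (2 * (cund - c)) = e * (cund * G2) - c * e * G2 by field.
move: model; rewrite scaleNr; lra.
Qed.

End Smooth.

(* A nonnegative sequence cannot drop by eta infinitely often: past some
   index r0 >= R1 it never falls more than eta below u r0. *)
Lemma nonneg_eventually_small_drops (R : realType) (u : nat -> R) (R1 : nat) (eta : R) :
  (forall r, 0 <= u r) -> 0 < eta ->
  exists2 r0, (R1 <= r0)%N & forall k, u r0 - eta < u (r0 + k)%N.
Proof.
move=> u_ge0 eta0; apply: contrapT => no_r0.
have big_drop r1 : (R1 <= r1)%N -> exists k, u (r1 + k)%N <= u r1 - eta.
  move=> h1; apply: contrapT => no_k; apply: no_r0; exists r1 => // k.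
  by rewrite ltNge; apply/negP => hle; apply: no_k; exists k.
have drops m : exists2 r1, (R1 <= r1)%N & u r1 <= u R1 - m%:R * eta.
  elim: m => [|m [r1 h1 IH]]; first by exists R1 => //; rewrite mul0r subr0.
  have [k hk] := big_drop r1 h1.
  exists (r1 + k)%N; first exact: leq_trans h1 (leq_addr _ _).
  by apply: le_trans hk _; rewrite -natr1 mulrDl mul1r; lra.
have ratio_ge0 : 0 <= u R1 / eta by rewrite divr_ge0 ?u_ge0 // ltW.
have [r1 _ h] := drops (Num.Def.archi_bound (u R1 / eta)).
have := archi_boundP ratio_ge0; rewrite ltr_pdivrMr // => hb.
have := u_ge0 r1; lra.
Qed.

Definition limit_point (R : realType) n (th : nat -> 'rV[R]_n) (p : 'rV[R]_n) :=
  forall rho, 0 < rho -> forall R0, exists2 r, (R0 <= r)%N & enorm (th r - p) < rho.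

Definition unbounded_tails (R : realType) (eps : nat -> R) :=
  forall M r, exists d, M < \sum_(r <= k < r + d) eps k.

Section LimitPoint.
Variables (R : realType) (n : nat).
Variables (f : 'rV[R]_n -> R) (grd : 'rV[R]_n -> 'rV[R]_n).
Variables (th : nat -> 'rV[R]_n) (eps : nat -> R) (Lc c s : R) (R1 : nat).
Hypotheses (Lc_ge0 : 0 <= Lc) (c_gt0 : 0 < c) (s_ge0 : 0 <= s).
Hypothesis f_ge0 : forall y, 0 <= f y.
Hypothesis grd_lip : forall a b, enorm (grd a - grd b) <= Lc * enorm (a - b).
Hypothesis eps_ge0 : forall r, 0 <= eps r.
Hypothesis decrease : forall r, (R1 <= r)%N ->
  f (th r.+1) <= f (th r) - c * eps r * enorm (grd (th r)) ^+ 2.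
Hypothesis step_length : forall r,
  enorm (th r.+1 - th r) <= eps r * s * enorm (grd (th r)).

Lemma grad_lower_near (p y : 'rV[R]_n) :
  enorm (y - p) <= enorm (grd p) / (2 * (Lc + 1)) ->
  enorm (grd p) / 2 <= enorm (grd y).
Proof.
set a := enorm (grd p) => hy.
have h1 : a <= enorm (grd p - grd y) + enorm (grd y).
  by rewrite /a -{1}(subrK (grd y) (grd p)); exact: enormD.
have h2 : enorm (grd p - grd y) <= Lc * (a / (2 * (Lc + 1))).
  apply: le_trans (grd_lip _ _) _; apply: ler_wpM2l => //.
  by rewrite -enormN opprB.
have h3 : Lc * (a / (2 * (Lc + 1))) <= a / 2.
  have L1 : 0 < Lc + 1 by have := Lc_ge0; lra.
  have -> : a / 2 = (Lc + 1) * (a / (2 * (Lc + 1))) by field; exact: lt0r_neq0.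
  by apply: ler_wpM2r; [rewrite divr_ge0 ?enorm_ge0 //; lra | lra].
lra.
Qed.

Lemma step_le_decrease (a : R) (q : nat) : 0 < a -> (R1 <= q)%N ->
  a / 2 <= enorm (grd (th q)) ->
  enorm (th q.+1 - th q) <= 2 * s / (c * a) * (f (th q) - f (th q.+1)).
Proof.
move=> a0 hq; set G := enorm (grd (th q)) => hG.
apply: le_trans (step_length q) _.
apply: (@le_trans _ _ (2 * s / (c * a) * (c * eps q * G ^+ 2))); last first.
  apply: ler_wpM2l; last by have := decrease hq; rewrite -/G; lra.
  by rewrite divr_ge0 ?mulr_ge0 // ltW // mulr_gt0.
have -> : 2 * s / (c * a) * (c * eps q * G ^+ 2) = eps q * s * G * (2 * G / a).
  by field; apply/andP; split; apply: lt0r_neq0.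
rewrite -{1}(mulr1 (eps q * s * G)); apply: ler_wpM2l.
  by rewrite mulr_ge0 ?enorm_ge0 // mulr_ge0.
by rewrite ler_pdivlMr // mul1r; lra.
Qed.

Lemma decrease_tail (r k : nat) : (R1 <= r)%N -> f (th (r + k)%N) <= f (th r).
Proof.
move=> hr; elim: k => [|k IH]; first by rewrite addn0.
apply: le_trans IH; rewrite addnS.
apply: le_trans (decrease (leq_trans hr (leq_addr _ _))) _.
by rewrite gerBl mulr_ge0 ?sqr_ge0 // mulr_ge0 // ltW.
Qed.

(* Trapping: if the iterate th r is close to p, the gradient is at least a/2
   on the ball B(p, rho), and f decreases by less than eta afterwards, then
   the total path length K (f (th r) - f (th (r + k))) keeps every later
   iterate inside B(p, rho). *)
Lemma trapped (p : 'rV[R]_n) (a rho eta : R) (r : nat) :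
  0 < a -> (R1 <= r)%N ->
  (forall y, enorm (y - p) <= rho -> a / 2 <= enorm (grd y)) ->
  2 * s / (c * a) * eta <= rho / 2 ->
  enorm (th r - p) < rho / 2 ->
  (forall k, f (th r) - f (th (r + k)%N) < eta) ->
  forall k, enorm (th (r + k)%N - p) <= rho.
Proof.
move=> a0 hr near; set K := 2 * s / (c * a) => Keta close small_drop.
have K0 : 0 <= K by rewrite /K divr_ge0 ?mulr_ge0 // ltW // mulr_gt0.
suff path k : enorm (th (r + k)%N - p) <= rho /\
              enorm (th (r + k)%N - th r) <= K * (f (th r) - f (th (r + k)%N)).
  by move=> k; have [] := path k.
elim: k => [|k [IH_in IH_path]].
  rewrite addn0 !subrr enorm0 mulr0; split => //.
  by have := enorm_ge0 (th r - p); lra.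
rewrite addnS; set q := (r + k)%N.
have hq : (R1 <= q)%N := leq_trans hr (leq_addr _ _).
have step := step_le_decrease a0 hq (near _ IH_in).
have path : enorm (th q.+1 - th r) <= K * (f (th r) - f (th q.+1)).
  apply: le_trans (enorm_sub_trans _ (th q) _) _.
  have := lerD step IH_path; rewrite -/K -mulrDr => h; apply: le_trans h _.
  by apply: ler_wpM2l => //; lra.
split => //.
apply: le_trans (enorm_sub_trans _ (th r) _) _.
have : K * (f (th r) - f (th q.+1)) <= K * eta.
  by apply: ler_wpM2l => //; have := small_drop k.+1; rewrite addnS -/q; lra.
lra.
Qed.

Lemma decrease_ge_sum_steps (a : R) (r d : nat) : 0 < a -> (R1 <= r)%N ->
  (forall k, a / 2 <= enorm (grd (th (r + k)%N))) ->
  c * (a / 2) ^+ 2 * \sum_(r <= k < r + d) eps k <= f (th r) - f (th (r + d)%N).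
Proof.
move=> a0 hr grad_big; elim: d => [|d IH]; first by rewrite addn0 big_geq // mulr0 subrr.
rewrite addnS big_nat_recr /= ?leq_addr //; set q := (r + d)%N.
have dq := decrease (leq_trans hr (leq_addr d _)); rewrite -/q in dq.
have : c * (a / 2) ^+ 2 * eps q <= c * eps q * enorm (grd (th q)) ^+ 2.
  rewrite mulrAC; apply: ler_wpM2l; first by rewrite mulr_ge0 // ltW.
  apply: lerXn2r; rewrite ?nnegrE ?enorm_ge0 ?divr_ge0 ?(ltW a0) //.
  exact: grad_big.
by rewrite (mulrDr (c * (a / 2) ^+ 2)); lra.
Qed.

(* Every limit point of the iteration is stationary when the step sizes have
   unbounded tails: near a non-stationary limit point the iterates would be
   trapped and f would decrease without bound. *)
Lemma limit_point_stationary (p : 'rV[R]_n) :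
  unbounded_tails eps -> limit_point th p -> grd p = 0.
Proof.
move=> unbounded lim_p; apply: enorm_eq0; set a := enorm (grd p).
apply/eqP; rewrite eq_le enorm_ge0 andbT leNgt; apply/negP => a0.
have L1 : 0 < Lc + 1 by have := Lc_ge0; lra.
set rho := a / (2 * (Lc + 1)).
have rho0 : 0 < rho by rewrite divr_gt0 // mulr_gt0.
have near y : enorm (y - p) <= rho -> a / 2 <= enorm (grd y).
  exact: grad_lower_near.
set eta := c * a * rho / (4 * (s + 1)).
have s1 : 0 < s + 1 by have := s_ge0; lra.
have eta0 : 0 < eta.
  by apply: divr_gt0; [apply: mulr_gt0 => //; exact: mulr_gt0 | exact: mulr_gt0].
have Keta : 2 * s / (c * a) * eta <= rho / 2.
  have -> : 2 * s / (c * a) * eta = rho / 2 * (s / (s + 1)).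
    by rewrite /eta; field; rewrite !lt0r_neq0.
  by apply: ler_piMr; [rewrite divr_ge0 // ltW | rewrite ler_pdivrMr //; lra].
have [r0 hr0 drop_r0] := nonneg_eventually_small_drops R1 (fun r => f_ge0 (th r)) eta0.
have [r hr close] := lim_p (rho / 2) (divr_gt0 rho0 (ltr0Sn _ 1)) r0.
have hR1r : (R1 <= r)%N := leq_trans hr0 hr.
have small_drop k : f (th r) - f (th (r + k)%N) < eta.
  have := drop_r0 (r - r0 + k)%N; rewrite addnA subnKC //.
  have := decrease_tail (r - r0) hr0; rewrite subnKC //; lra.
have stay := trapped a0 hR1r near Keta close small_drop.
have b0 : 0 < c * (a / 2) ^+ 2 by rewrite mulr_gt0 // exprn_gt0 // divr_gt0.
have [d hd] := unbounded (f (th r) / (c * (a / 2) ^+ 2)) r.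
have := decrease_ge_sum_steps d a0 hR1r (fun k => near _ (stay k)).
have := f_ge0 (th (r + d)%N).
move: hd; rewrite ltr_pdivrMr // mulrC; lra.
Qed.

End LimitPoint.

Section EmpiricalLoss.
Variables (R : realType) (N Dx Du Dth : nat).
Variables (xs : 'I_N -> 'rV[R]_Dx) (us : 'I_N -> 'rV[R]_Du).
Variable uhat : 'rV[R]_Dth -> 'rV[R]_Dx -> 'rV[R]_Du.
Variable ell : 'rV[R]_Du -> 'rV[R]_Du -> R.
Hypothesis uhat_diff : forall i th, differentiable (fun th' => uhat th' (xs i)) th.
Hypothesis ell_diff : forall i q, differentiable (fun q' => ell q' (us i)) q.

Local Notation L := (emp_loss xs us uhat ell).

Let sample_loss i := (fun q' => ell q' (us i)) \o (fun th' => uhat th' (xs i)).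

Lemma emp_loss_sum : L = N%:R^-1 *: \sum_(i < N) sample_loss i.
Proof. by apply: funext => t; rewrite /emp_loss /= fct_sumE. Qed.

Lemma emp_loss_diff p : differentiable L p.
Proof.
rewrite emp_loss_sum; apply/differentiableZ/differentiable_sum => i.
exact: differentiable_comp.
Qed.

Lemma emp_loss_diffE p v : 'd L p v =
  N%:R^-1 * \sum_(i < N) 'd (fun q' => ell q' (us i)) (uhat p (xs i))
                          ('d (fun th' => uhat th' (xs i)) p v).
Proof.
have sample_derivable i : derivable (sample_loss i) p v.
  exact/diff_derivable/differentiable_comp.
rewrite -deriveE; last exact: emp_loss_diff.
rewrite emp_loss_sum deriveZ; last exact: derivable_sum.
rewrite derive_sum //; congr (_ * _); apply: eq_bigr => i _.
by rewrite deriveE ?diff_comp //; exact: differentiable_comp.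
Qed.

Lemma uX_entry i j : (fun t => uX xs uhat t 0 (mxvec_index i j)) =
  (fun M : 'rV[R]_Du => M 0 j) \o (fun th' => uhat th' (xs i)).
Proof. by apply: funext => t; rewrite /uX /= mxvecE mxE. Qed.

Lemma uX_diff p : differentiable (uX xs uhat) p.
Proof.
have -> : uX xs uhat = \sum_(k < N * Du) (fun t => uX xs uhat t 0 k *: 'e_k).
  by apply: funext => t; rewrite fct_sumE; exact: row_sum_delta.
apply: differentiable_sum => k; apply: differentiableZl.
case/mxvec_indexP: k => i j; rewrite uX_entry.
by apply: differentiable_comp => //; exact: differentiable_coord.
Qed.

Lemma uX_diffE p v i j : ('d (uX xs uhat) p v) 0 (mxvec_index i j) =
   ('d (fun th' => uhat th' (xs i)) p v) 0 j.
Proof.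
rewrite -!deriveE //; last exact: uX_diff.
rewrite derive_mx; last exact/diff_derivable/uX_diff.
by rewrite derive_mx ?mxE ?uX_entry //; exact/diff_derivable.
Qed.

Lemma uX_diff_surj p : \rank (jac (uX xs uhat) p) = (N * Du)%N ->
  forall y : 'rV_(N * Du), exists v, 'd (uX xs uhat) p v = y.
Proof.
move=> full y.
have row_full_J : row_full (jacobian (uX xs uhat) p).
  by rewrite /row_full -mxrank_tr full.
have /submxP [v ->] := submx_full y row_full_J.
by exists v; rewrite /jacobian mul_rV_lin1.
Qed.

(* At a stationary point where the Jacobian has full rank, every sample
   loss is stationary in its prediction: perturb prediction i0 alone. *)
Lemma sample_grad_eq0 (p : 'rV[R]_Dth) (i0 : 'I_N) :
  \rank (jac (uX xs uhat) p) = (N * Du)%N -> grad L p = 0 ->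
  grad (fun q' => ell q' (us i0)) (uhat p (xs i0)) = 0.
Proof.
move=> full stat; apply/rowP => j; rewrite !mxE.
set w : 'rV[R]_Du := delta_mx 0 j.
have [v hv] := uX_diff_surj full (mxvec (\matrix_(i, j) if i == i0 then w 0 j else 0)).
have dv i : 'd (fun th' => uhat th' (xs i)) p v = if i == i0 then w else 0.
  apply/rowP => k; rewrite -uX_diffE hv mxvecE mxE.
  by case: eqP => _ //; rewrite mxE.
have := grad_dotv L p v; rewrite stat dotv0l emp_loss_diffE.
rewrite (bigD1 i0) //= big1 => [|i /negPf ne]; last by rewrite dv ne linear0.
have N0 : N%:R^-1 != 0 :> R.
  by rewrite invr_eq0 pnatr_eq0 -lt0n (leq_ltn_trans _ (ltn_ord i0)).
by rewrite dv eqxx addr0 => /esym/eqP; rewrite mulf_eq0 (negPf N0) => /eqP.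
Qed.

Lemma full_rank_stationary_global_min (p : 'rV[R]_Dth) :
  \rank (jac (uX xs uhat) p) = (N * Du)%N ->
  (forall i q, grad (fun q' => ell q' (us i)) q = 0 ->
     forall q', ell q (us i) <= ell q' (us i)) ->
  grad L p = 0 -> forall p', L p <= L p'.
Proof.
move=> full sample_opt stat p'; apply: ler_wpM2l; first by rewrite invr_ge0.
by apply: ler_sum => i _; apply: sample_opt; exact: sample_grad_eq0.
Qed.

End EmpiricalLoss.

Definition admissible_steps (R : realType) (eps : nat -> R) (Lc cbar cund : R) :=
  (exists zeta : R, 0 < zeta /\
     forall r, zeta <= eps r /\ eps r * (Lc * cbar) <= cund * (2 - zeta))
  \/ ((forall r, 0 < eps r) /\ eps @ \oo --> (0 : R) /\
      ([series eps k]_k @ \oo --> +oo)%R).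

Section StepSizes.
Variables (R : realType) (eps : nat -> R) (Lc cbar cund : R).
Hypotheses (Lc_ge0 : 0 <= Lc) (cbar_gt0 : 0 < cbar) (cund_gt0 : 0 < cund).
Hypothesis steps : admissible_steps eps Lc cbar cund.

Lemma steps_ge0 r : 0 <= eps r.
Proof.
case: steps => [[zeta [zeta0 bounds]]|[pos _]]; last exact: ltW.
by have [low _] := bounds r; apply: le_trans low; exact: ltW.
Qed.

Lemma steps_margin : exists2 c, 0 < c & exists R1 : nat,
  forall r, (R1 <= r)%N -> eps r * (Lc * cbar) <= 2 * (cund - c).
Proof.
have LC0 : 0 <= Lc * cbar by rewrite mulr_ge0 // ltW.
case: steps => [[zeta [zeta0 bounds]]|[_ [to0 _]]].
  exists (cund * zeta / 2); first by rewrite divr_gt0 // mulr_gt0.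
  by exists 0%N => r _; have [_ h] := bounds r; lra.
exists (cund / 2); first by rewrite divr_gt0.
have tol : 0 < cund / (Lc * cbar + 1) by rewrite divr_gt0 //; lra.
move/cvgrPdist_lt : to0 => /(_ _ tol) [R1 _ near0]; exists R1 => r hr.
have := near0 r hr; rewrite /= sub0r normrN ger0_norm ?steps_ge0 // => epsr.
have : eps r * (Lc * cbar) <= cund / (Lc * cbar + 1) * (Lc * cbar).
  by apply: ler_wpM2r => //; exact: ltW.
have : cund / (Lc * cbar + 1) * (Lc * cbar) <= cund.
  rewrite mulrAC ler_pdivrMr; last lra.
  by apply: ler_wpM2l; [exact: ltW | lra].
lra.
Qed.

Lemma steps_unbounded_tails : unbounded_tails eps.
Proof.
move=> M r; case: steps => [[zeta [zeta0 bounds]]|[_ [_ series_oo]]].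
  have := archi_boundP (divr_ge0 (normr_ge0 M) (ltW zeta0)).
  rewrite ltr_pdivrMr // => hb; exists (Num.bound (`|M| / zeta)).
  have : \sum_(r <= k < r + Num.bound (`|M| / zeta)) zeta
           <= \sum_(r <= k < r + Num.bound (`|M| / zeta)) eps k.
    by apply: ler_sum => k _; have [] := bounds k.
  rewrite sumr_const_nat addKn -mulr_natl.
  have := ler_norm M; lra.
move/cvgryPgt : series_oo => /(_ (M + [series eps k]_k r)) [N0 _ large].
have := large (maxn N0 r) (leq_maxl _ _); rewrite /= /series /= => partial.
exists (maxn N0 r - r)%N; rewrite subnKC ?leq_maxr //.
move: partial; rewrite (@big_cat_nat _ _ _ r 0 (maxn N0 r)) ?leq_maxr //=; lra.
Qed.

End StepSizes.

(* A cluster point of th in the topology of 'rV[R]_n is a limit point for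
   the Euclidean distance (the two norms are equivalent). *)
Lemma cluster_limit_point (R : realType) n (th : nat -> 'rV[R]_n) (p : 'rV[R]_n) :
  cluster (th @ \oo) p -> limit_point th p.
Proof.
move=> clus rho rho0 R0.
have del0 : 0 < rho / (n%:R + 1) by rewrite divr_gt0 // ltr_wpDl.
have [||y [[r hr ->] near_p]] := clus [set y | exists2 r, (R0 <= r)%N & y = th r]
    (ball p (rho / (n%:R + 1))).
- by exists R0 => // m hm; exists m.
- exact: nbhsx_ballx.
exists r => //; move: near_p; rewrite -ball_normE /= distrC => near_p.
apply: le_lt_trans (enorm_le_mx_norm _) _.
apply: (@le_lt_trans _ _ (n%:R * (rho / (n%:R + 1)))).
  by apply: ler_wpM2l => //; exact: ltW.
rewrite mulrC -mulrA gtr_pMr // mulrC ltr_pdivrMr; have := ler0n R n; lra.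
Qed.

Theorem theorem2 (R : realType) (N Dx Du Dth : nat)
  (X : set 'rV[R]_Dx) (U : set 'rV[R]_Du)
  (xs : 'I_N -> 'rV[R]_Dx) (us : 'I_N -> 'rV[R]_Du)
  (hxs : forall i, X (xs i)) (hus : forall i, U (us i))
  (uhat : 'rV[R]_Dth -> 'rV[R]_Dx -> 'rV[R]_Du)
  (huhat : forall i (th : 'rV[R]_Dth), differentiable (fun th' => uhat th' (xs i)) th)
  (ell : 'rV[R]_Du -> 'rV[R]_Du -> R)
  (hell0 : forall q u, U u -> 0 <= ell q u)
  (hstat : optimal_stationarity U ell)
  (Lc : R) (hLc : 0 <= Lc)
  (hLip : forall th th' : 'rV[R]_Dth,
     enorm (grad (emp_loss xs us uhat ell) th - grad (emp_loss xs us uhat ell) th')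
       <= Lc * enorm (th - th'))
  (theta : nat -> 'rV[R]_Dth) (eps : nat -> R) (g : nat -> 'rV[R]_Dth)
  (hstep : forall r, theta r.+1 = theta r - eps r *: g r)
  (cbar cund : R) (hcbar : 0 < cbar) (hcund : 0 < cund)
  (hdesc : forall r, cund * enorm (grad (emp_loss xs us uhat ell) (theta r)) ^+ 2
                      <= dotv (grad (emp_loss xs us uhat ell) (theta r)) (g r))
  (hbnd : forall r, enorm (g r) ^+ 2
                      <= cbar * enorm (grad (emp_loss xs us uhat ell) (theta r)) ^+ 2)
  (heps : (exists zeta : R, 0 < zeta /\
             forall r, zeta <= eps r /\ eps r * (Lc * cbar) <= cund * (2 - zeta))
          \/ ((forall r, 0 < eps r) /\ eps @ \oo --> (0 : R) /\
              ([series eps k]_k @ \oo --> +oo)%R)) :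
  forall th : 'rV[R]_Dth,
    cluster (theta @ \oo) th ->
    \rank (jac (uX xs uhat) th) = (N * Du)%N ->
    forall th' : 'rV[R]_Dth,
      emp_loss xs us uhat ell th <= emp_loss xs us uhat ell th'.
Proof.
move=> th clus full; set L := emp_loss xs us uhat ell.
have ell_diff i q : differentiable (fun q' => ell q' (us i)) q := (hstat _ (hus i) q).1.
have L_ge0 y : 0 <= L y.
  by rewrite mulr_ge0 ?invr_ge0 // sumr_ge0 // => i _; exact: hell0.
have [c c0 [R1 margin]] := steps_margin hLc hcbar hcund heps.
have eps_ge0 := steps_ge0 heps.
have decrease r : (R1 <= r)%N ->
    L (theta r.+1) <= L (theta r) - c * eps r * enorm (grad L (theta r)) ^+ 2.
  move=> hr; rewrite hstep.
  by apply: gradient_related_step_decrease => //; [exact: emp_loss_diff | exact: margin].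
have step_len r :
    enorm (theta r.+1 - theta r) <= eps r * Num.sqrt cbar * enorm (grad L (theta r)).
  by rewrite hstep addrAC subrr add0r enormN step_length_bound // ltW.
apply: (full_rank_stationary_global_min huhat ell_diff full) => [i q|].
  exact: (hstat _ (hus i) q).2.
exact (limit_point_stationary hLc c0 (sqrtr_ge0 cbar) L_ge0 hLip eps_ge0 decrease step_len
  (steps_unbounded_tails heps) (cluster_limit_point clus)).
Qed.
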